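(* Let $\overline{G}_n=\overline{H}_0\overline{H}_1\cdots\overline{H}_{n-1}$ be a polyphenyl hexagonal chain with $n$ hexagons and let $t_k$ be the tail vertex (in $\overline{H}_{k-1}$) of the cut-edge attaching $\overline{H}_k$, $1\le k\le n-1$. Then $$W(\overline{G}_n)=6\sum_{k=1}^{n-1}\sum_{i=1}^{k}g(t_i)+45n^2-18n=6\sum_{k=1}^{n-1}(n-k)g(t_k)+45n^2-18n,$$ where $g(t_1)=9$ and, for $k\ge2$, $g(t_k)=12(k-1)+9$ if $t_k$ is $o_{k-1}$, $g(t_k)=18(k-1)+9$ if $t_k$ is $m_{k-1}$, and $g(t_k)=24(k-1)+9$ if $t_k$ is $p_{k-1}$.
   Context: All graphs are simple and connected; the Wiener index is $W(G)=\sum_{\{u,v\}\subseteq V(G)}d_G(u,v)$ with $d_G$ the shortest-path distance. A polyphenyl hexagonal chain $\overline{G}_n=\overline{H}_0\overline{H}_1\cdots\overline{H}_{n-1}$ of length $n$ consists of pairwise vertex-disjoint hexagons (6-cycles) $\overline{H}_0,\dots,\overline{H}_{n-1}$ together with cut-edges: $\overline{G}_1=\overline{H}_0$, and for $k\ge1$, $\overline{G}_{k+1}$ is obtained from $\overline{G}_k$ by adding $\overline{H}_k$ and a cut-edge joining a vertex $c_k$ of $\overline{H}_k$ to a vertex $t_k$ of $\overline{H}_{k-1}$ (the tail), where for $k\ge2$, $t_k\ne c_{k-1}$. For $k\ge1$, a vertex of $\overline{H}_k$ at distance $1$, $2$, $3$ from $c_k$ is an ortho-, meta-, para-vertex of $\overline{H}_k$,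 denoted $o_k,m_k,p_k$; thus for $k\ge2$, $t_k$ is one of $o_{k-1},m_{k-1},p_{k-1}$. *)

From mathcomp Require Import all_boot.
Set Implicit Arguments. Unset Strict Implicit. Unset Printing Implicit Defensive.

Definition walkb (T : finType) (e : rel T) (u v : T) (k : nat) : bool :=
  [exists p : k.-tuple T, path e u p && (last u p == v)].

(* shortest-path distance: least k admitting a walk of length k from u to v.
   In a connected graph every distance is < #|T|, so the search over
   0 .. #|T|-1 finds it. *)
Definition dist (T : finType) (e : rel T) (u v : T) : nat :=
  find (walkb e u v) (iota 0 #|T|).

Definition wiener (T : finType) (e : rel T) : nat :=
  \sum_(u : T) \sum_(v : T | enum_rank u < enum_rank v) dist e u v.

(* Vertex (k, j): the j-th vertex (in cyclic order) of hexagon H_k.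
   c k : the vertex c_k of H_k incident to the k-th cut edge (k >= 1);
   t k : the tail vertex t_k of H_(k-1) of that cut edge (k >= 1). *)
Definition pvert (n : nat) := ('I_n * 'I_6)%type.

Definition hex_adj (i j : 'I_6) : bool :=
  (j == (i + 1) %% 6 :> nat) || (i == (j + 1) %% 6 :> nat).

Definition chain_adj (n : nat) (c t : nat -> 'I_6) : rel (pvert n) :=
  fun x y =>
    [|| ((x.1 == y.1 :> nat) && hex_adj x.2 y.2),
        [&& 1 <= x.1, (y.1 : nat) == x.1 - 1, x.2 == c x.1 & y.2 == t x.1]
      | [&& 1 <= y.1, (x.1 : nat) == y.1 - 1, y.2 == c y.1 & x.2 == t y.1]].

Arguments chain_adj n c t : clear implicits.

Definition valid_chain (n : nat) (c t : nat -> 'I_6) : Prop :=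
  forall k, 2 <= k < n -> t k != c k.-1.

Definition hexdist (i j : 'I_6) : nat :=
  minn ((i + 6 - j) %% 6) ((j + 6 - i) %% 6).

(* g(t_k): t_k is an ortho/meta/para vertex of H_(k-1) according as its
   distance from c_(k-1) in H_(k-1) is 1/2/3. *)
Definition gval (c t : nat -> 'I_6) (k : nat) : nat :=
  if k == 1 then 9
  else match hexdist (t k) (c k.-1) with
       | 1 => 12 * (k - 1) + 9
       | 2 => 18 * (k - 1) + 9
       | _ => 24 * (k - 1) + 9
       end.

(* Distances in a polyphenyl chain are explicit: from vertex i of H_a to
   vertex j of H_b (a < b) one walks inside H_a to the tail t_(a+1), crosses
   the b - a cut edges, traverses every intermediate hexagon H_m from c_m to
   t_(m+1), and finally walks inside H_b from c_b to j.  Since the distances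
   from a fixed vertex of a hexagon to its six vertices add up to 9, the 36
   distances between two hexagons H_a, H_b add up to 108 + 36 d(t_(a+1), c_b).
   Adding the hexagon H_m therefore raises the doubled Wiener index by
   2 (108 m + 36 A_m) + 54, where A_m is the sum of the distances from the
   tails t_(a+1), a < m, to c_m; and A_(m+1) - A_m = m (d(c_m, t_(m+1)) + 1) + 1,
   which is (g(t_(m+1)) - 3) / 6.  The formula follows by induction on n. *)
From mathcomp Require Import all_boot zify.

Lemma find_iota_minimal (P : pred nat) m d N :
  P (m + d) -> (forall k, k < d -> ~~ P (m + k)) -> d < N ->
  find P (iota m N) = d.
Proof.
elim: N m d => [|N IHN] m [|d] // Pd minP ltdN /=.
- by rewrite addn0 in Pd; rewrite Pd.
- have /negbTE -> : ~~ P m by have := minP 0 isT; rewrite addn0.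
  congr S; apply: IHN => //; first by rewrite addSnnS.
  by move=> k ltkd; rewrite addSnnS; apply: minP.
Qed.

Section Walks.
Variables (T : finType) (e : rel T).

Lemma walkb_nil u : walkb e u u 0.
Proof. by apply/existsP; exists (in_tuple [::]); rewrite /= eqxx. Qed.

Lemma walkb_rcons u v w k : walkb e u v k -> e v w -> walkb e u w k.+1.
Proof.
case/existsP => p /andP [pathp /eqP lastp] evw; apply/existsP.
exists (rcons_tuple p w).
by rewrite /= rcons_path pathp lastp evw last_rcons eqxx.
Qed.

Lemma walkb_lipschitz (f : T -> nat) u v k :
  (forall y z, e y z -> f z <= f y + 1) -> walkb e u v k -> f v <= f u + k.
Proof.
move=> lip_f /existsP [[p /= /eqP <-] /andP [pathp /eqP <-]].
elim: p u pathp => [|x s IHs] u /=; first by rewrite addn0.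
by case/andP => /lip_f exu /IHs; lia.
Qed.

Lemma dist_potential u (f : T -> nat) :
  (forall y z, e y z -> f z <= f y + 1) ->
  (forall v, v != u -> exists2 z, e z v & f z + 1 = f v) ->
  f u = 0 -> (forall v, f v < #|T|) ->
  forall v, dist e u v = f v.
Proof.
move=> lip_f pred_f fu0 f_small v.
have walk_f k : forall w, f w = k -> walkb e u w k.
  elim: k => [|k IHk] w fw.
  - case: (eqVneq w u) => [-> | /pred_f [z _]]; [exact: walkb_nil | lia].
  - have /pred_f [z ezw fz] : w != u by apply/eqP => eq_wu; move: fw; rewrite eq_wu fu0.
    by apply: walkb_rcons ezw; apply: IHk; lia.
apply: find_iota_minimal => //=; first exact: walk_f.
move=> k ltk; apply/negP => /(@walkb_lipschitz f _ _ _ lip_f); lia.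
Qed.

Lemma wiener_double :
  (forall u v, dist e u v = dist e v u) -> (forall u, dist e u u = 0) ->
  2 * wiener e = \sum_u \sum_v dist e u v.
Proof.
move=> distC dist0.
have split_row u : \sum_v dist e u v =
    \sum_(v | enum_rank u < enum_rank v) dist e u v +
    \sum_(v | enum_rank v < enum_rank u) dist e u v.
  rewrite (bigID (fun v => enum_rank u < enum_rank v)) /=; congr (_ + _).
  rewrite (bigID (fun v => enum_rank v < enum_rank u)) /= [X in _ + X]big1 ?addn0.
  - by apply: eq_bigl => v; rewrite -leqNgt; apply: andb_idl => /ltnW.
  - move=> v; rewrite -!leqNgt => /andP [le_vu le_uv].
    have /enum_rank_inj -> : enum_rank u = enum_rank v.
      by apply/val_inj/eqP; rewrite eqn_leq le_uv le_vu.
    exact: dist0.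
rewrite (eq_bigr _ (fun u _ => split_row u)) big_split /= /wiener mul2n -addnn.
congr (_ + _); rewrite (exchange_big_dep predT) //=.
by apply: eq_bigr => u _; apply: eq_bigr => v _; apply: distC.
Qed.

End Walks.

Lemma hexdistC (i j : 'I_6) : hexdist i j = hexdist j i.
Proof. by move: i j; do 2![case=> [[|[|[|[|[|[|//]]]]]] ?]]. Qed.

Lemma hexdistii (i : 'I_6) : hexdist i i = 0.
Proof. by case: i => [[|[|[|[|[|[|//]]]]]] ?]. Qed.

Lemma hexdist_eq0 (i j : 'I_6) : hexdist i j = 0 -> i = j.
Proof. by move: i j; do 2![case=> [[|[|[|[|[|[|//]]]]]] ?]] => //= _; apply: val_inj. Qed.

Lemma hexdist_le3 (i j : 'I_6) : hexdist i j <= 3.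
Proof. by move: i j; do 2![case=> [[|[|[|[|[|[|//]]]]]] ?]]. Qed.

Lemma sum_hexdist (i : 'I_6) : \sum_(j < 6) hexdist i j = 9.
Proof. by rewrite !big_ord_recr big_ord0; case: i => [[|[|[|[|[|[|//]]]]]] ?]. Qed.

Lemma sum_add_hexdist X (i : 'I_6) : \sum_(j < 6) (X + hexdist i j) = 6 * X + 9.
Proof. by rewrite big_split /= sum_hexdist sum_nat_const card_ord mulnC. Qed.

Lemma hexdist_adj (i j k : 'I_6) : hex_adj j k -> hexdist i k <= hexdist i j + 1.
Proof. by move: i j k; do 3![case=> [[|[|[|[|[|[|//]]]]]] ?]]. Qed.

Lemma hexdist_adjl (i j k : 'I_6) : hex_adj j k -> hexdist k i <= hexdist j i + 1.
Proof. by rewrite (hexdistC k) (hexdistC j); apply: hexdist_adj. Qed.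

Definition hex_ord (m : nat) : 'I_6 := Ordinal (ltn_pmod m (isT : 0 < 6)).

Definition hex_toward (i j : 'I_6) : 'I_6 :=
  if (j + 6 - i) %% 6 <= 3 then hex_ord (j + 5) else hex_ord (j + 1).

Lemma hex_towardP (i j : 'I_6) : j != i ->
  hex_adj (hex_toward i j) j /\ hexdist i (hex_toward i j) + 1 = hexdist i j.
Proof. by move: i j; do 2![case=> [[|[|[|[|[|[|//]]]]]] ?]]. Qed.

Section ChainDistance.
Variables c t : nat -> 'I_6.

Definition transit a b := \sum_(a.+1 <= m < b) hexdist (c m) (t m.+1).

Definition chain_dist_lt a (i : 'I_6) b (j : 'I_6) :=
  hexdist i (t a.+1) + (b - a) + transit a b + hexdist (c b) j.

Definition chain_dist a (i : 'I_6) b (j : 'I_6) :=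
  if a == b then hexdist i j
  else if a < b then chain_dist_lt a i b j else chain_dist_lt b j a i.

Lemma transit_recr a b : a < b -> transit a b.+1 = transit a b + hexdist (c b) (t b.+1).
Proof. by move=> ltab; rewrite /transit big_nat_recr. Qed.

Lemma transit_recl a b : a.+1 < b -> transit a b = hexdist (c a.+1) (t a.+2) + transit a.+1 b.
Proof. by move=> ltab; rewrite /transit big_ltn. Qed.

Lemma transit_next a : transit a a.+1 = 0.
Proof. by rewrite /transit big_geq. Qed.

Lemma transit_le a b : transit a b <= 3 * (b - a.+1).
Proof.
rewrite /transit mulnC -sum_nat_const_nat.
by apply: leq_sum => m _; apply: hexdist_le3.
Qed.

Lemma chain_distC a i b j : chain_dist a i b j = chain_dist b j a i.
Proof. by rewrite /chain_dist; case: ltngtP => // _; apply: hexdistC. Qed.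

Lemma chain_dist_same a i j : chain_dist a i a j = hexdist i j.
Proof. by rewrite /chain_dist eqxx. Qed.

Lemma chain_dist_ltE a i b j : a < b -> chain_dist a i b j = chain_dist_lt a i b j.
Proof. by rewrite /chain_dist; case: ltngtP. Qed.

Lemma chain_dist_gtE a i b j : b < a -> chain_dist a i b j = chain_dist_lt b j a i.
Proof. by rewrite /chain_dist; case: ltngtP. Qed.

Lemma chain_dist_cut_up a i m : a <= m ->
  chain_dist a i m.+1 (c m.+1) = chain_dist a i m (t m.+1) + 1.
Proof.
rewrite leq_eqVlt => /orP [/eqP -> | ltam].
  by rewrite chain_dist_same chain_dist_ltE // /chain_dist_lt transit_next subSnn hexdistii; lia.
have ltam1 : a < m.+1 := ltnW ltam.
rewrite !chain_dist_ltE // /chain_dist_lt transit_recr // hexdistii; lia.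
Qed.

Lemma chain_dist_cut_down a i m : m < a ->
  chain_dist a i m (t m.+1) = chain_dist a i m.+1 (c m.+1) + 1.
Proof.
move=> ltma; rewrite chain_dist_gtE // /chain_dist_lt hexdistii.
case: (ltngtP a m.+1) => [ltam1 | ltm1a | ->].
- lia.
- by rewrite chain_dist_gtE // /chain_dist_lt (transit_recl m) //; lia.
- by rewrite chain_dist_same transit_next subSnn hexdistC; lia.
Qed.

Lemma chain_dist_small n a i b j : a < n -> b < n -> chain_dist a i b j < 6 * n.
Proof.
move=> ltan ltbn; rewrite /chain_dist /chain_dist_lt.
have := hexdist_le3 i j; have := hexdist_le3 i (t a.+1); have := hexdist_le3 j (t b.+1).
have := hexdist_le3 (c b) j; have := hexdist_le3 (c a) i.
have := transit_le a b; have := transit_le b a.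
by case: eqP => ?; [lia | case: (ltngtP a b) => ?; lia].
Qed.

Variable n : nat.

Lemma chain_dist_adj (x y z : pvert n) :
  chain_adj n c t y z -> chain_dist x.1 x.2 z.1 z.2 <= chain_dist x.1 x.2 y.1 y.2 + 1.
Proof.
case: x y z => [[a ltan] i] [[b ltbn] j] [[b' ltb'n] j']; rewrite /chain_adj /=.
case/or3P => [/andP [/eqP eqbb' adj_jj'] | /and4P [b_gt0 /eqP eqb' /eqP -> /eqP ->]
                                          | /and4P [b'_gt0 /eqP eqb /eqP -> /eqP ->]].
- subst b'; case: (ltngtP a b) => [ltab | ltba | <-].
  + by rewrite !chain_dist_ltE // /chain_dist_lt; have := hexdist_adj (c b) _ _ adj_jj'; lia.
  + by rewrite !chain_dist_gtE // /chain_dist_lt; have := hexdist_adjl (t b.+1) _ _ adj_jj'; lia.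
  + by rewrite !chain_dist_same; apply: hexdist_adj.
- subst b'; case: b ltbn ltb'n b_gt0 => // m _ _ _; rewrite subn1 /=.
  by case: (leqP a m) => [/chain_dist_cut_up | /chain_dist_cut_down] ->; lia.
- subst b; case: b' ltb'n ltbn b'_gt0 => // m _ _ _; rewrite subn1 /=.
  by case: (leqP a m) => [/chain_dist_cut_up | /chain_dist_cut_down] ->; lia.
Qed.

Lemma chain_dist_pred (x y : pvert n) : y != x ->
  exists2 z : pvert n, chain_adj n c t z y &
    chain_dist x.1 x.2 z.1 z.2 + 1 = chain_dist x.1 x.2 y.1 y.2.
Proof.
case: x y => [[a ltan] i] [[b ltbn] j] neq_yx /=.
have adj_toward s : j != s -> chain_adj n c t (Ordinal ltbn, hex_toward s j) (Ordinal ltbn, j).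
  by move=> /hex_towardP [adj _]; rewrite /chain_adj /= eqxx adj.
case: (ltngtP a b) => [ltab | ltba | eqab].
- case: (eqVneq j (c b)) => [-> | neq_jc].
  + case: b ltbn ltab {neq_yx adj_toward} => // m ltm1n ltam.
    exists (Ordinal (ltnW ltm1n), t m.+1); last by rewrite /= chain_dist_cut_up.
    by rewrite /chain_adj /= !subn1 /= !eqxx !orbT.
  + exists (Ordinal ltbn, hex_toward (c b) j); first exact: adj_toward.
    rewrite /= !chain_dist_ltE // /chain_dist_lt.
    by have [_ <-] := hex_towardP _ _ neq_jc; lia.
- case: (eqVneq j (t b.+1)) => [-> | neq_jt].
  + have ltb1n : b.+1 < n by apply: leq_ltn_trans ltba ltan.
    exists (Ordinal ltb1n, c b.+1); last by rewrite /= chain_dist_cut_down.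
    by rewrite /chain_adj /= subn1 /= !eqxx orbT.
  + exists (Ordinal ltbn, hex_toward (t b.+1) j); first exact: adj_toward.
    rewrite /= !chain_dist_gtE // /chain_dist_lt (hexdistC (hex_toward _ _)) (hexdistC j).
    by have [_ <-] := hex_towardP _ _ neq_jt; lia.
- subst b; case: (eqVneq j i) => [eq_ji | neq_ji].
  + by move: neq_yx; rewrite eq_ji (bool_irrelevance ltbn ltan) eqxx.
  + exists (Ordinal ltbn, hex_toward i j); first exact: adj_toward.
    by rewrite /= !chain_dist_same; have [_] := hex_towardP _ _ neq_ji.
Qed.

Lemma chain_distE (x y : pvert n) :
  dist (chain_adj n c t) x y = chain_dist x.1 x.2 y.1 y.2.
Proof.
apply: (@dist_potential _ _ x (fun z : pvert n => chain_dist x.1 x.2 z.1 z.2)).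
- exact: chain_dist_adj.
- exact: chain_dist_pred.
- by rewrite chain_dist_same hexdistii.
- by move=> z; rewrite card_prod !card_ord mulnC; apply: chain_dist_small.
Qed.

End ChainDistance.

Lemma sum_partial_sums (F : nat -> nat) n :
  \sum_(1 <= k < n) \sum_(1 <= i < k.+1) F i = \sum_(1 <= k < n) (n - k) * F k.
Proof.
elim: n => [|[|n] IHn]; [by rewrite !big_geq.. |].
have split_weight : \sum_(1 <= k < n.+1) (n.+2 - k) * F k =
    \sum_(1 <= k < n.+1) (n.+1 - k) * F k + \sum_(1 <= k < n.+1) F k.
  rewrite -big_split; apply: eq_big_nat => k /andP [_ ltkn].
  by rewrite (subSn (ltnW ltkn)) mulSn addnC.
rewrite big_nat_recr //= IHn [RHS]big_nat_recr //= split_weight subSnn mul1n.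
by rewrite [X in _ + X]big_nat_recr //=; lia.
Qed.

Section ChainSums.
Variables c t : nat -> 'I_6.

Definition hex_pair_sum a b := \sum_(i < 6) \sum_(j < 6) chain_dist c t a i b j.

Definition chain_dist_total n := \sum_(a < n) \sum_(b < n) hex_pair_sum a b.

Definition tail_dist_sum m := \sum_(a < m) chain_dist c t a (t a.+1) m (c m).

Lemma hex_pair_sumC a b : hex_pair_sum a b = hex_pair_sum b a.
Proof.
rewrite /hex_pair_sum exchange_big.
by apply: eq_bigr => j _; apply: eq_bigr => i _; apply: chain_distC.
Qed.

Lemma hex_pair_sum_same a : hex_pair_sum a a = 54.
Proof.
rewrite /hex_pair_sum (eq_bigr (fun _ => 0 + 9)) ?sum_nat_const ?card_ord // => i _.
by rewrite -(sum_add_hexdist 0 i); apply: eq_bigr => j _; rewrite chain_dist_same.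
Qed.

Lemma hex_pair_sum_lt a b : a < b ->
  hex_pair_sum a b = 108 + 36 * chain_dist c t a (t a.+1) b (c b).
Proof.
move=> ltab; rewrite /hex_pair_sum chain_dist_ltE // /chain_dist_lt !hexdistii addn0.
set D := b - a + transit c t a b.
rewrite (eq_bigr (fun i => 6 * hexdist (t a.+1) i + (6 * D + 9))); last first.
  move=> i _; rewrite (hexdistC (t a.+1)) addnA -mulnDr -(sum_add_hexdist _ (c b)).
  by apply: eq_bigr => j _; rewrite chain_dist_ltE // /chain_dist_lt /D !addnA.
by rewrite big_split /= -big_distrr /= sum_hexdist sum_nat_const card_ord; lia.
Qed.

Lemma tail_dist_sumS m :
  tail_dist_sum m.+1 = tail_dist_sum m + m * (hexdist (c m) (t m.+1) + 1) + 1.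
Proof.
rewrite /tail_dist_sum big_ord_recr /= chain_dist_ltE // /chain_dist_lt.
rewrite transit_next subSnn !hexdistii addn0.
rewrite (eq_bigr (fun a : 'I_m =>
    chain_dist c t a (t a.+1) m (c m) + (hexdist (c m) (t m.+1) + 1))).
  by rewrite big_split /= sum_nat_const card_ord; lia.
move=> [a ltam] _ /=; have ltam1 : a < m.+1 := ltnW ltam.
rewrite !chain_dist_ltE // /chain_dist_lt transit_recr // subSn //.
by rewrite !hexdistii; lia.
Qed.

Lemma chain_dist_totalS m :
  chain_dist_total m.+1 = chain_dist_total m + 2 * (108 * m + 36 * tail_dist_sum m) + 54.
Proof.
have row_last : \sum_(a < m) hex_pair_sum a m = 108 * m + 36 * tail_dist_sum m.
  rewrite (eq_bigr (fun a : 'I_m => 108 + 36 * chain_dist c t a (t a.+1) m (c m))).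
    by rewrite big_split /= -big_distrr sum_nat_const card_ord mulnC.
  by move=> a _; apply: hex_pair_sum_lt.
rewrite /chain_dist_total big_ord_recr /=.
rewrite (eq_bigr (fun a : 'I_m => \sum_(b < m) hex_pair_sum a b + hex_pair_sum a m)); last first.
  by move=> a _; rewrite big_ord_recr.
have col_last : \sum_(b < m) hex_pair_sum m b = 108 * m + 36 * tail_dist_sum m.
  by rewrite -row_last; apply: eq_bigr => b _; apply: hex_pair_sumC.
rewrite big_split big_ord_recr /= hex_pair_sum_same row_last col_last; lia.
Qed.

Lemma gval_succ N m : valid_chain N c t -> m.+1 < N ->
  gval c t m.+1 = 6 * m * (hexdist (c m) (t m.+1) + 1) + 9.
Proof.
case: m => [//|m] valid ltmN.
have /negP neq_tc := valid m.+2 ltmN.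
rewrite /gval /= subn1 /= (hexdistC (c _)).
have := hexdist_le3 (t m.+2) (c m.+1).
case: (hexdist (t m.+2) (c m.+1)) (@hexdist_eq0 (t m.+2) (c m.+1)) => [|[|[|[|d]]]] //=.
- by move=> /(_ erefl) eq_tc; case: neq_tc; rewrite eq_tc.
- 1,2,3: by move=> _ _; lia.
Qed.

Lemma sum_gval N m : valid_chain N c t -> m < N ->
  \sum_(1 <= i < m.+1) gval c t i = 6 * tail_dist_sum m + 3 * m.
Proof.
move=> valid; elim: m => [|m IHm] ltmN; first by rewrite big_geq // /tail_dist_sum big_ord0.
rewrite big_nat_recr //= IHm ?(ltnW ltmN) // (gval_succ _ _ valid ltmN) tail_dist_sumS; lia.
Qed.

Lemma chain_dist_total_gval N m : valid_chain N c t -> m <= N ->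
  chain_dist_total m + 36 * m =
    12 * (\sum_(1 <= k < m) \sum_(1 <= i < k.+1) gval c t i) + 90 * m ^ 2.
Proof.
move=> valid; elim: m => [|m IHm] lemN; first by rewrite /chain_dist_total big_ord0 big_geq.
rewrite chain_dist_totalS.
have -> : \sum_(1 <= k < m.+1) \sum_(1 <= i < k.+1) gval c t i =
    \sum_(1 <= k < m) \sum_(1 <= i < k.+1) gval c t i + \sum_(1 <= i < m.+1) gval c t i.
  by case: m {IHm lemN} => [|m]; [rewrite !big_geq | rewrite big_nat_recr].
rewrite (sum_gval _ _ valid lemN); have := IHm (ltnW lemN); nia.
Qed.

Lemma wiener_chain n : 2 * wiener (chain_adj n c t) = chain_dist_total n.
Proof.
have sum_pvert (F : pvert n -> nat) : \sum_x F x = \sum_(a < n) \sum_(i < 6) F (a, i).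
  by rewrite pair_bigA; apply: eq_bigr => [[]].
rewrite wiener_double; last by move=> u; rewrite chain_distE chain_dist_same hexdistii.
- rewrite sum_pvert /chain_dist_total; apply: eq_bigr => a _.
  rewrite /hex_pair_sum [RHS]exchange_big; apply: eq_bigr => i _.
  rewrite sum_pvert; apply: eq_bigr => b _; apply: eq_bigr => j _.
  by rewrite chain_distE.
- by move=> u v; rewrite !chain_distE chain_distC.
Qed.

End ChainSums.

Theorem theorem3p2 (n : nat) (c t : nat -> 'I_6) :
  1 <= n -> valid_chain n c t ->
  wiener (chain_adj n c t) =
    6 * (\sum_(1 <= k < n) \sum_(1 <= i < k.+1) gval c t i) + 45 * n ^ 2 - 18 * n
  /\
  wiener (chain_adj n c t) =
    6 * (\sum_(1 <= k < n) (n - k) * gval c t k) + 45 * n ^ 2 - 18 * n.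
Proof.
move=> _ valid.
have := chain_dist_total_gval _ _ _ _ valid (leqnn n).
rewrite -wiener_chain -sum_partial_sums.
by split; lia.
Qed.
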